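(* Let $A_1,\dots,A_5$ be five points in the plane, with all subscripts taken modulo $5$, and assume the configuration is nondegenerate, in the sense that every line, intersection point and circle described below exists and is well defined. For $i=1,\dots,5$ define: - $B_{i+3}$ = the intersection point of the lines $A_iA_{i+1}$ and $A_{i+2}A_{i+3}$; - $K_{i+2}$ = the center of the circumcircle of triangle $A_iA_{i+1}B_{i+2}$; - $C_{i+1}$ = the second intersection point (other than $A_{i+1}$) of the circumcircles of triangles $A_iA_{i+1}B_{i+2}$ and $A_{i+1}A_{i+2}B_{i+3}$; - $L_i$ = the center of the circumcircle of triangle $C_{i+1}B_{i+2}B_{i+3}$. Assume that the five points $A_1,\dots,A_5$ lie on a circle with center $O$. The five points $C_1,\dots,C_5$ lie on a circle (Miquel's pentagram theorem); let $J$ be its center. The five lines $K_iL_i$, $i=1,\dots,5$, pass through a common point $X$. Then the points $O$, $J$, $X$ are collinear.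
   Context: Points are in the Euclidean plane; all indices are read modulo 5. *)

From HB Require Import structures.
From mathcomp Require Import all_boot all_order all_algebra.
From mathcomp Require Import reals.
Set Implicit Arguments. Unset Strict Implicit. Unset Printing Implicit Defensive.
Import Order.TTheory GRing.Theory Num.Theory.
Local Open Scope ring_scope.

Section Geo.
Variable R : realType.
Definition pt := (R * R)%type.

Definition cross (O P Q : pt) : R :=
  (P.1 - O.1) * (Q.2 - O.2) - (P.2 - O.2) * (Q.1 - O.1).

Definition sqdist (P Q : pt) : R := (P.1 - Q.1) ^+ 2 + (P.2 - Q.2) ^+ 2.

Definition collinear (P Q S : pt) : Prop := cross P Q S = 0.

(* X lies on the line through P and Q (P <> Q required separately) *)
Definition on_line (P Q X : pt) : Prop := cross P Q X = 0.

(* the lines PQ and ST are well defined and not parallel, so meet in one point *)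
Definition lines_meet (P Q S T : pt) : Prop :=
  (Q.1 - P.1) * (T.2 - S.2) - (Q.2 - P.2) * (T.1 - S.1) != 0.

Definition circumcenter (P Q S Z : pt) : Prop :=
  ~ collinear P Q S /\ sqdist Z P = sqdist Z Q /\ sqdist Z P = sqdist Z S.
End Geo.

Definition nx (i : 'I_5) (k : nat) : 'I_5 :=
  Ordinal (ltn_pmod (i + k) (isT : 0 < 5)%N).

(* Put O at the origin and scale the circle through the A_i to the unit circle.  In
   complex coordinates every point z comes with its conjugate, and for the vertices
   conj a_i = 1 / a_i, so every point of the figure is a rational function of a_0, ..., a_4:
   B, K and L solve linear systems (chords, perpendicular bisectors), and C_(i+1) is the
   reflection of A_(i+1) in the line of centres K_(i+2) K_(i+3).  The centre J of the Miquel
   circle and the common point X of the lines K_i L_i come out as N / P and N / D with one and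
   the same numerator N, so J and X are real multiples of the same complex number, i.e. they
   are collinear with O.  The denominators P and D do not vanish: every triangle of Miquel
   points has signed area divisible by P D^2, while the Miquel points are not collinear
   because their circumcentre J is unique. *)

From HB Require Import structures.
From mathcomp Require Import all_boot all_order all_algebra.
From mathcomp Require Import reals ring complex.
Set Implicit Arguments. Unset Strict Implicit. Unset Printing Implicit Defensive.
Import Order.TTheory GRing.Theory Num.Theory.
Local Open Scope ring_scope.

(* Closes the side conditions of [field]: each must be, up to sign, a hypothesis. *)
Ltac nonzero :=
  repeat (apply/andP; split); rewrite ?oppr_eq0;
  match goal with
  | H : is_true (?d != _) |- is_true (?e != _) =>
      first [ exact H
            | (suff -> : e = d by []); ring
            | (suff -> : e = - d by rewrite oppr_eq0); ring ]
  end.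

(* A point with complex coordinate z is encoded by the pair (z, conj z), whose two entries
   are then treated as independent elements of a field; up to constant factors [icross] is
   the signed area of a triangle, [imeet] the cross product of two directions and [idist]
   the squared distance. *)
Section IsotropicCoordinates.
Context {F : fieldType}.
Implicit Types (p q s t b k c : F * F).

Definition icross p q s := (q.1 - p.1) * (s.2 - p.2) - (q.2 - p.2) * (s.1 - p.1).
Definition imeet p q s t := (q.1 - p.1) * (t.2 - s.2) - (q.2 - p.2) * (t.1 - s.1).
Definition idist p q := (p.1 - q.1) * (p.2 - q.2).

Lemma linear2_eq0 (a b c d u v : F) : a * d - b * c != 0 ->
  a * u + b * v = 0 -> c * u + d * v = 0 -> u = 0 /\ v = 0.
Proof.
move=> hdet e1 e2.
have eu : u * (a * d - b * c) = d * (a * u + b * v) - b * (c * u + d * v) by ring.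
have ev : v * (a * d - b * c) = a * (c * u + d * v) - c * (a * u + b * v) by ring.
rewrite e1 e2 !mulr0 subrr in eu ev.
by split; apply: (mulIf hdet); rewrite mul0r.
Qed.

Lemma lines_meet_unique p q s t b b' : imeet p q s t != 0 ->
  icross p q b = 0 -> icross s t b = 0 -> icross p q b' = 0 -> icross s t b' = 0 -> b = b'.
Proof.
move=> hm h1 h2 h1' h2'.
have [] := @linear2_eq0 (p.2 - q.2) (q.1 - p.1) (s.2 - t.2) (t.1 - s.1) (b.1 - b'.1) (b.2 - b'.2).
- by move: hm; rewrite /imeet; congr (_ != 0); ring.
- transitivity (icross p q b - icross p q b'); first by rewrite /icross; ring.
  by rewrite h1 h1' subrr.
- transitivity (icross s t b - icross s t b'); first by rewrite /icross; ring.
  by rewrite h2 h2' subrr.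
by case: b b' {h1 h2 h1' h2'} => [b1 b2] [b1' b2'] /= /subr0_eq -> /subr0_eq ->.
Qed.

Lemma circumcenter_unique p q s k k' : icross p q s != 0 ->
  idist k p = idist k q -> idist k p = idist k s ->
  idist k' p = idist k' q -> idist k' p = idist k' s -> k = k'.
Proof.
move=> hc h1 h2 h1' h2'.
have [] := @linear2_eq0 (q.2 - p.2) (q.1 - p.1) (s.2 - p.2) (s.1 - p.1) (k.1 - k'.1) (k.2 - k'.2).
- by move: hc; rewrite -oppr_eq0 /icross; congr (_ != 0); ring.
- transitivity ((idist k p - idist k q) - (idist k' p - idist k' q)).
    by rewrite /idist; ring.
  by rewrite h1 h1' !subrr.
- transitivity ((idist k p - idist k s) - (idist k' p - idist k' s)).
    by rewrite /idist; ring.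
  by rewrite h2 h2' !subrr.
by case: k k' {h1 h2 h1' h2'} => [k1 k2] [k1' k2'] /= /subr0_eq -> /subr0_eq ->.
Qed.

(* For actual points, the reflection of [p] in the line [k k']. *)
Definition ireflect k k' p : F * F :=
  (k.1 + (k'.1 - k.1) / (k'.2 - k.2) * (p.2 - k.2),
   k.2 + (k'.2 - k.2) / (k'.1 - k.1) * (p.1 - k.1)).

Lemma circles_second_meet1 k k' p c : k.2 != k'.2 -> c.1 != p.1 ->
  idist k c = idist k p -> idist k' c = idist k' p -> c.1 = (ireflect k k' p).1.
Proof.
move=> hk hc e e'.
have : (c.1 - p.1) * ((c.1 - k.1) * (k'.2 - k.2) - (k'.1 - k.1) * (p.2 - k.2)) = 0.
  transitivity ((c.1 - k'.1) * (idist k c - idist k p) + (k.1 - c.1) * (idist k' c - idist k' p)).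
    by rewrite /idist; ring.
  by rewrite e e' !subrr !mulr0 addr0.
move/eqP; rewrite mulf_eq0 subr_eq0 (negbTE hc) /= subr_eq0 => /eqP e2.
have hk' : k'.2 - k.2 != 0 by rewrite subr_eq0 eq_sym.
rewrite /ireflect /= -[LHS](subrK k.1) addrC; congr (_ + _).
by apply: (mulIf hk'); rewrite e2 mulrAC mulfVK.
Qed.

Lemma circles_second_meet k k' p c : k.1 != k'.1 -> k.2 != k'.2 -> c.1 != p.1 ->
  idist k c = idist k p -> idist k' c = idist k' p -> c = ireflect k k' p.
Proof.
move=> h1 h2 hc e e'.
have hc2 : c.2 != p.2.
  apply: contraNneq h2 => ec2.
  have : (c.1 - p.1) * (k'.2 - k.2) = 0.
    transitivity ((idist k c - idist k p) - (idist k' c - idist k' p)).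
      by rewrite /idist ec2; ring.
    by rewrite e e' !subrr.
  by move/eqP; rewrite mulf_eq0 subr_eq0 (negbTE hc) /= subr_eq0 eq_sym.
pose sw (u : F * F) := (u.2, u.1).
have swd u v : idist (sw u) (sw v) = idist u v by rewrite /idist mulrC.
case: c e e' hc hc2 => c1 c2 e e' hc hc2; congr pair.
  exact: (@circles_second_meet1 k k' p (c1, c2)).
by apply: (@circles_second_meet1 (sw k) (sw k') (sw p) (sw (c1, c2))); rewrite ?swd.
Qed.

Lemma icross_scaled (p q r : F * F) (D u v a b c d e f : F) :
  a != 0 -> b != 0 -> c != 0 -> d != 0 -> e != 0 -> f != 0 ->
  q.1 - p.1 = u * D / (a * b) -> q.2 - p.2 = - (u * D) / (c * d) ->
  r.1 - p.1 = v * D / (a * e) -> r.2 - p.2 = - (v * D) / (c * f) ->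
  icross p q r = D ^+ 2 * (u * v * (b * f - d * e)) / (a * b * c * d * e * f).
Proof.
move=> na nb nc nd ne nf q1 q2 r1 r2; rewrite /icross q1 q2 r1 r2.
by field; nonzero.
Qed.

End IsotropicCoordinates.

(* If x_k is the coordinate of A_(i+k), then [meetB x0 x1 x2 x3] is B_(i+3),
   [centerK x0 x1 x2 x3] is K_(i+3), [miquelC x0 x1 x2 x3 x4] is C_(i+1) and
   [centerL x0 x1 x2 x3 x4] is L_i. *)
Section UnitCirclePentagon.
Context {F : fieldType}.
Implicit Types (b k c l : F * F).

Definition unit_pt (x : F) : F * F := (x, x^-1).

Definition meetB (x0 x1 x2 x3 : F) : F * F :=
  ((x0 * x1 * (x2 + x3) - x2 * x3 * (x0 + x1)) / (x0 * x1 - x2 * x3),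
   (x0 + x1 - x2 - x3) / (x0 * x1 - x2 * x3)).

Lemma imeet_unit_pt (x0 x1 x2 x3 : F) : x0 != 0 -> x1 != 0 -> x2 != 0 -> x3 != 0 ->
  imeet (unit_pt x0) (unit_pt x1) (unit_pt x2) (unit_pt x3)
  = (x1 - x0) * (x3 - x2) * (x2 * x3 - x0 * x1) / (x0 * x1 * x2 * x3).
Proof. by move=> *; rewrite /imeet /=; field; nonzero. Qed.

Lemma imeet_unit_pt_neq0 (x0 x1 x2 x3 : F) : x0 != 0 -> x1 != 0 -> x2 != 0 -> x3 != 0 ->
  imeet (unit_pt x0) (unit_pt x1) (unit_pt x2) (unit_pt x3) != 0 ->
  x0 - x1 != 0 /\ x0 * x1 - x2 * x3 != 0.
Proof.
move=> n0 n1 n2 n3; rewrite imeet_unit_pt // => hm.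
split; rewrite -oppr_eq0 opprB; apply: contraNneq hm => ->; by rewrite !(mul0r, mulr0).
Qed.

Lemma meetBP (x0 x1 x2 x3 : F) b : x0 != 0 -> x1 != 0 -> x2 != 0 -> x3 != 0 ->
  imeet (unit_pt x0) (unit_pt x1) (unit_pt x2) (unit_pt x3) != 0 ->
  icross (unit_pt x0) (unit_pt x1) b = 0 -> icross (unit_pt x2) (unit_pt x3) b = 0 ->
  b = meetB x0 x1 x2 x3.
Proof.
move=> n0 n1 n2 n3 hm h01 h23; have [_ p] := imeet_unit_pt_neq0 n0 n1 n2 n3 hm.
apply: (lines_meet_unique hm h01 h23); rewrite /icross /meetB /=; field; nonzero.
Qed.

Definition centerK (x0 x1 x2 x3 : F) : F * F :=
  (x1 * x2 * (x3 - x0) / (x2 * x3 - x0 * x1), (x3 - x0) / (x2 * x3 - x0 * x1)).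

Lemma centerKP (x0 x1 x2 x3 : F) k : x0 != 0 -> x1 != 0 -> x2 != 0 -> x3 != 0 ->
  x0 * x1 - x2 * x3 != 0 -> icross (unit_pt x1) (unit_pt x2) (meetB x0 x1 x2 x3) != 0 ->
  idist k (unit_pt x1) = idist k (unit_pt x2) ->
  idist k (unit_pt x1) = idist k (meetB x0 x1 x2 x3) ->
  k = centerK x0 x1 x2 x3.
Proof.
move=> n0 n1 n2 n3 p hc e1 e2; apply: (circumcenter_unique hc e1 e2);
  by rewrite /idist /centerK /meetB /=; field; nonzero.
Qed.

Definition miquel_den1 (x0 x1 x2 x3 x4 : F) :=
  x0^+2*x4 - x0*x1*x4 - x0*x3*x4 + x1*x2*x3 - x2^+2*x3 + x2*x3*x4.
Definition miquel_den2 (x0 x1 x2 x3 x4 : F) :=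
  x0^+2*x1*x2 - x0^+2*x1*x4 + x0^+2*x2*x4 - x0*x1*x2^+2 - x0*x2^+2*x3 + x1*x2^+2*x3.

Lemma centerK_sub (x0 x1 x2 x3 x4 : F) : x0 != 0 -> x1 != 0 -> x2 != 0 -> x3 != 0 -> x4 != 0 ->
  x4 * x0 - x1 * x2 != 0 -> x0 * x1 - x2 * x3 != 0 ->
  (centerK x0 x1 x2 x3).1 - (centerK x4 x0 x1 x2).1
    = x1 * miquel_den2 x0 x1 x2 x3 x4 / ((x0 * x1 - x2 * x3) * (x4 * x0 - x1 * x2)) /\
  (centerK x0 x1 x2 x3).2 - (centerK x4 x0 x1 x2).2
    = miquel_den1 x0 x1 x2 x3 x4 / ((x0 * x1 - x2 * x3) * (x4 * x0 - x1 * x2)).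
Proof. by move=> *; rewrite /centerK /miquel_den1 /miquel_den2 /=; split; field; nonzero. Qed.

Definition miquelC (x0 x1 x2 x3 x4 : F) : F * F :=
  ((x0^+2*x2*x4 + x0*x1*x2*x3 - x0*x1*x2*x4 - x0*x1*x3*x4 - x0*x2^+2*x3 + x1*x2*x3*x4)
     / miquel_den1 x0 x1 x2 x3 x4,
   (x0^+2*x2 - x0*x1*x4 - x0*x2^+2 - x0*x2*x3 + x0*x2*x4 + x1*x2*x3)
     / miquel_den2 x0 x1 x2 x3 x4).

Lemma miquelCP (x0 x1 x2 x3 x4 : F) c : x0 != 0 -> x1 != 0 -> x2 != 0 -> x3 != 0 -> x4 != 0 ->
  x4 * x0 - x1 * x2 != 0 -> x0 * x1 - x2 * x3 != 0 ->
  miquel_den1 x0 x1 x2 x3 x4 != 0 -> miquel_den2 x0 x1 x2 x3 x4 != 0 -> c.1 != x1 ->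
  idist (centerK x4 x0 x1 x2) c = idist (centerK x4 x0 x1 x2) (unit_pt x1) ->
  idist (centerK x0 x1 x2 x3) c = idist (centerK x0 x1 x2 x3) (unit_pt x1) ->
  c = miquelC x0 x1 x2 x3 x4.
Proof.
move=> n0 n1 n2 n3 n4 p4 p0 d1 d2 hc e e'.
have [e1 e2] := centerK_sub n0 n1 n2 n3 n4 p4 p0.
rewrite (circles_second_meet (p := unit_pt x1) _ _ hc e e') /ireflect ?e1 ?e2; last 2 first.
- by rewrite eq_sym -subr_eq0 e1 !mulf_eq0 invr_eq0 !negb_or n1 d2 /= mulf_neq0.
- by rewrite eq_sym -subr_eq0 e2 mulf_eq0 invr_eq0 negb_or d1 /= mulf_neq0.
move: d1 d2; rewrite /centerK /miquelC /miquel_den1 /miquel_den2 /= => d1 d2.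
by congr pair; field; nonzero.
Qed.

Definition centerL (x0 x1 x2 x3 x4 : F) : F * F :=
  ((- x0^+2*x1^+2*x2*x3 + x0^+2*x1^+2*x3*x4 + x0^+2*x1*x2*x3*x4 - x0^+2*x1*x2*x4^+2
    - x0^+2*x1*x3*x4^+2 + x0^+2*x2*x3*x4^+2 + x0*x1^+2*x2^+2*x4 + x0*x1*x2^+2*x3^+2
    - x0*x1*x2^+2*x3*x4 - x0*x1*x2*x3^+2*x4 + x0*x1*x2*x3*x4^+2 - x0*x2^+2*x3^+2*x4
    - x1^+2*x2^+2*x3*x4 + x1*x2^+2*x3^+2*x4)
     / ((x3 - x4) * (x0 * x1 - x2 * x3) * (x4 * x0 - x1 * x2)),
   - (x0^+2*x1*x4 - x0^+2*x3*x4 - x0*x1^+2*x4 + x0*x1*x2*x3 - x0*x1*x2*x4 - x0*x1*x3*x4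
    + x0*x1*x4^+2 + x0*x3^+2*x4 + x1^+2*x2*x3 - x1*x2^+2*x3 - x1*x2*x3^+2 + x1*x2*x3*x4
    + x2^+2*x3*x4 - x2*x3*x4^+2)
     / ((x3 - x4) * (x0 * x1 - x2 * x3) * (x4 * x0 - x1 * x2))).

Lemma centerLP (x0 x1 x2 x3 x4 : F) l : x0 != 0 -> x1 != 0 -> x2 != 0 -> x3 != 0 -> x4 != 0 ->
  x3 - x4 != 0 -> x4 * x0 - x1 * x2 != 0 -> x0 * x1 - x2 * x3 != 0 ->
  miquel_den1 x0 x1 x2 x3 x4 != 0 -> miquel_den2 x0 x1 x2 x3 x4 != 0 ->
  icross (miquelC x0 x1 x2 x3 x4) (meetB x4 x0 x1 x2) (meetB x0 x1 x2 x3) != 0 ->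
  idist l (miquelC x0 x1 x2 x3 x4) = idist l (meetB x4 x0 x1 x2) ->
  idist l (miquelC x0 x1 x2 x3 x4) = idist l (meetB x0 x1 x2 x3) ->
  l = centerL x0 x1 x2 x3 x4.
Proof.
move=> n0 n1 n2 n3 n4 d34 p4 p0 d1 d2 hc e1 e2; apply: (circumcenter_unique hc e1 e2);
  move: d1 d2; rewrite /idist /centerL /miquelC /meetB /miquel_den1 /miquel_den2 /= => d1 d2;
  by field; nonzero.
Qed.

Definition generic_pentagon (x0 x1 x2 x3 x4 : F) := [/\
  [/\ x0 != 0, x1 != 0, x2 != 0, x3 != 0 & x4 != 0],
  [/\ x0 - x1 != 0, x1 - x2 != 0, x2 - x3 != 0, x3 - x4 != 0 & x4 - x0 != 0],
  [/\ x0 * x1 - x2 * x3 != 0, x1 * x2 - x3 * x4 != 0, x2 * x3 - x4 * x0 != 0,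
      x3 * x4 - x0 * x1 != 0 & x4 * x0 - x1 * x2 != 0],
  [/\ miquel_den1 x0 x1 x2 x3 x4 != 0, miquel_den1 x1 x2 x3 x4 x0 != 0,
      miquel_den1 x2 x3 x4 x0 x1 != 0, miquel_den1 x3 x4 x0 x1 x2 != 0
    & miquel_den1 x4 x0 x1 x2 x3 != 0] &
  [/\ miquel_den2 x0 x1 x2 x3 x4 != 0, miquel_den2 x1 x2 x3 x4 x0 != 0,
      miquel_den2 x2 x3 x4 x0 x1 != 0, miquel_den2 x3 x4 x0 x1 x2 != 0
    & miquel_den2 x4 x0 x1 x2 x3 != 0]].

Definition num1 (x0 x1 x2 x3 x4 : F) :=
  - x0^+2*x1^+2*x2*x3 + x0^+2*x1^+2*x3*x4 - x0^+2*x1*x2*x4^+2 + x0^+2*x2*x3*x4^+2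
  + x0*x1^+2*x2^+2*x4 + x0*x1*x2^+2*x3^+2 - x0*x1*x3^+2*x4^+2 - x0*x2^+2*x3^+2*x4
  - x1^+2*x2^+2*x3*x4 + x1*x2*x3^+2*x4^+2.
Definition num2 (x0 x1 x2 x3 x4 : F) :=
  x0^+2*x1*x2 - x0^+2*x3*x4 - x0*x1^+2*x4 - x0*x1*x2^+2 + x0*x1*x4^+2 + x0*x3^+2*x4
  + x1^+2*x2*x3 - x1*x2*x3^+2 + x2^+2*x3*x4 - x2*x3*x4^+2.
Definition denJ (x0 x1 x2 x3 x4 : F) :=
  - x0^+2*x1^+2*x2 + x0^+2*x1^+2*x4 - x0^+2*x1*x2*x4 + x0^+2*x1*x3*x4 - x0^+2*x1*x4^+2
  + x0^+2*x3*x4^+2 + x0*x1^+2*x2^+2 - x0*x1^+2*x2*x3 + x0*x1^+2*x2*x4 + x0*x1*x2^+2*x3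
  - x0*x1*x3*x4^+2 - x0*x2*x3^+2*x4 + x0*x2*x3*x4^+2 - x0*x3^+2*x4^+2 - x1^+2*x2^+2*x3
  + x1*x2^+2*x3^+2 - x1*x2^+2*x3*x4 + x1*x2*x3^+2*x4 - x2^+2*x3^+2*x4 + x2*x3^+2*x4^+2.
Definition denX (x0 x1 x2 x3 x4 : F) :=
  - x0^+2*x1*x2*x4 + x0^+2*x1*x3*x4 - x0*x1^+2*x2*x3 + x0*x1^+2*x2*x4 + x0*x1*x2^+2*x3
  - x0*x1*x3*x4^+2 - x0*x2*x3^+2*x4 + x0*x2*x3*x4^+2 - x1*x2^+2*x3*x4 + x1*x2*x3^+2*x4.

Definition centerJ (x0 x1 x2 x3 x4 : F) : F * F :=
  (num1 x0 x1 x2 x3 x4 / denJ x0 x1 x2 x3 x4, - num2 x0 x1 x2 x3 x4 / denJ x0 x1 x2 x3 x4).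
Definition pointX (x0 x1 x2 x3 x4 : F) : F * F :=
  (num1 x0 x1 x2 x3 x4 / denX x0 x1 x2 x3 x4, - num2 x0 x1 x2 x3 x4 / denX x0 x1 x2 x3 x4).

Lemma icross_centerJ_pointX (x0 x1 x2 x3 x4 : F) :
  icross (0, 0) (centerJ x0 x1 x2 x3 x4) (pointX x0 x1 x2 x3 x4) = 0.
Proof. by rewrite /icross /=; ring. Qed.

Lemma centerJ_rot (x0 x1 x2 x3 x4 : F) : centerJ x1 x2 x3 x4 x0 = centerJ x0 x1 x2 x3 x4.
Proof. by rewrite /centerJ /num1 /num2 /denJ; congr (_ / _, - _ / _); ring. Qed.

Lemma pointX_rot (x0 x1 x2 x3 x4 : F) : pointX x1 x2 x3 x4 x0 = pointX x0 x1 x2 x3 x4.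
Proof. by rewrite /pointX /num1 /num2 /denX; congr (_ / _, - _ / _); ring. Qed.

Lemma denJ_rot (x0 x1 x2 x3 x4 : F) : denJ x1 x2 x3 x4 x0 = denJ x0 x1 x2 x3 x4.
Proof. by rewrite /denJ; ring. Qed.

Lemma denX_rot (x0 x1 x2 x3 x4 : F) : denX x1 x2 x3 x4 x0 = denX x0 x1 x2 x3 x4.
Proof. by rewrite /denX; ring. Qed.

Lemma num1_inv (x0 x1 x2 x3 x4 : F) : x0 != 0 -> x1 != 0 -> x2 != 0 -> x3 != 0 -> x4 != 0 ->
  num1 x0^-1 x1^-1 x2^-1 x3^-1 x4^-1 = num2 x0 x1 x2 x3 x4 / (x0 * x1 * x2 * x3 * x4) ^+ 2.
Proof. by rewrite /num1 /num2 => *; field; nonzero. Qed.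

Lemma denJ_inv (x0 x1 x2 x3 x4 : F) : x0 != 0 -> x1 != 0 -> x2 != 0 -> x3 != 0 -> x4 != 0 ->
  denJ x0^-1 x1^-1 x2^-1 x3^-1 x4^-1 = - denJ x0 x1 x2 x3 x4 / (x0 * x1 * x2 * x3 * x4) ^+ 2.
Proof. by rewrite /denJ => *; field; nonzero. Qed.

Lemma denX_inv (x0 x1 x2 x3 x4 : F) : x0 != 0 -> x1 != 0 -> x2 != 0 -> x3 != 0 -> x4 != 0 ->
  denX x0^-1 x1^-1 x2^-1 x3^-1 x4^-1 = - denX x0 x1 x2 x3 x4 / (x0 * x1 * x2 * x3 * x4) ^+ 2.
Proof. by rewrite /denX => *; field; nonzero. Qed.

Local Notation rmorph_simpl := (rmorphD, rmorphB, rmorphN, rmorphM, rmorphXn).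

Section Conjugation.
Variables (f : {rmorphism F -> F}) (x0 x1 x2 x3 x4 : F).
Hypotheses (n0 : x0 != 0) (n1 : x1 != 0) (n2 : x2 != 0) (n3 : x3 != 0) (n4 : x4 != 0).
Hypotheses (f0 : f x0 = x0^-1) (f1 : f x1 = x1^-1) (f2 : f x2 = x2^-1) (f3 : f x3 = x3^-1)
  (f4 : f x4 = x4^-1).

Let f_num1 : f (num1 x0 x1 x2 x3 x4) = num2 x0 x1 x2 x3 x4 / (x0 * x1 * x2 * x3 * x4) ^+ 2.
Proof. by rewrite -num1_inv // -f0 -f1 -f2 -f3 -f4 /num1 !rmorph_simpl. Qed.

Let f_denJ : f (denJ x0 x1 x2 x3 x4) = - denJ x0 x1 x2 x3 x4 / (x0 * x1 * x2 * x3 * x4) ^+ 2.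
Proof. by rewrite -denJ_inv // -f0 -f1 -f2 -f3 -f4 /denJ !rmorph_simpl. Qed.

Let f_denX : f (denX x0 x1 x2 x3 x4) = - denX x0 x1 x2 x3 x4 / (x0 * x1 * x2 * x3 * x4) ^+ 2.
Proof. by rewrite -denX_inv // -f0 -f1 -f2 -f3 -f4 /denX !rmorph_simpl. Qed.

Lemma centerJ_conj : denJ x0 x1 x2 x3 x4 != 0 ->
  f (centerJ x0 x1 x2 x3 x4).1 = (centerJ x0 x1 x2 x3 x4).2.
Proof. by move=> nJ; rewrite /centerJ /= fmorph_div f_num1 f_denJ; field; nonzero. Qed.

Lemma pointX_conj : denX x0 x1 x2 x3 x4 != 0 ->
  f (pointX x0 x1 x2 x3 x4).1 = (pointX x0 x1 x2 x3 x4).2.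
Proof. by move=> nX; rewrite /pointX /= fmorph_div f_num1 f_denX; field; nonzero. Qed.

End Conjugation.

Lemma centerJ_equidist (x0 x1 x2 x3 x4 : F) :
  generic_pentagon x0 x1 x2 x3 x4 -> denJ x0 x1 x2 x3 x4 != 0 ->
  idist (centerJ x0 x1 x2 x3 x4) (miquelC x0 x1 x2 x3 x4)
    = idist (centerJ x0 x1 x2 x3 x4) (miquelC x4 x0 x1 x2 x3).
Proof.
move=> [[? ? ? ? ?] _ _ [? _ _ _ ?] [? _ _ _ ?]].
rewrite /idist /centerJ /miquelC /num1 /num2 /denJ /miquel_den1 /miquel_den2 /= => nJ.
by field; nonzero.
Qed.

Lemma pointX_on_KL (x0 x1 x2 x3 x4 : F) :
  generic_pentagon x0 x1 x2 x3 x4 -> denX x0 x1 x2 x3 x4 != 0 ->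
  icross (centerK x2 x3 x4 x0) (centerL x0 x1 x2 x3 x4) (pointX x0 x1 x2 x3 x4) = 0.
Proof.
move=> [[? ? ? ? ?] [? ? ? ? ?] [? ? ? ? ?] _ _].
rewrite /icross /centerK /centerL /pointX /num1 /num2 /denX /= => nX.
by field; nonzero.
Qed.

Lemma miquelC_sub1 (x0 x1 x2 x3 x4 : F) : generic_pentagon x0 x1 x2 x3 x4 ->
  (miquelC x0 x1 x2 x3 x4).1 - (miquelC x4 x0 x1 x2 x3).1
    = (x0 - x1) * (x4 - x2) * denX x0 x1 x2 x3 x4
      / (miquel_den1 x4 x0 x1 x2 x3 * miquel_den1 x0 x1 x2 x3 x4) /\
  (miquelC x0 x1 x2 x3 x4).2 - (miquelC x4 x0 x1 x2 x3).2
    = - ((x0 - x1) * (x4 - x2) * denX x0 x1 x2 x3 x4)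
      / (miquel_den2 x4 x0 x1 x2 x3 * miquel_den2 x0 x1 x2 x3 x4).
Proof.
move=> [[? ? ? ? ?] _ _ [? _ _ _ ?] [? _ _ _ ?]].
by rewrite /miquelC /denX /miquel_den1 /miquel_den2 /=; split; field; nonzero.
Qed.

Lemma miquelC_sub2 (x0 x1 x2 x3 x4 : F) : generic_pentagon x0 x1 x2 x3 x4 ->
  (miquelC x1 x2 x3 x4 x0).1 - (miquelC x4 x0 x1 x2 x3).1
    = (x1 - x3) * (x1 - x4) * denX x0 x1 x2 x3 x4
      / (miquel_den1 x4 x0 x1 x2 x3 * miquel_den1 x1 x2 x3 x4 x0) /\
  (miquelC x1 x2 x3 x4 x0).2 - (miquelC x4 x0 x1 x2 x3).2
    = - ((x1 - x3) * (x1 - x4) * denX x0 x1 x2 x3 x4)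
      / (miquel_den2 x4 x0 x1 x2 x3 * miquel_den2 x1 x2 x3 x4 x0).
Proof.
move=> [[? ? ? ? ?] _ _ [_ ? _ _ ?] [_ ? _ _ ?]].
by rewrite /miquelC /denX /miquel_den1 /miquel_den2 /=; split; field; nonzero.
Qed.

Lemma miquelC_sub3 (x0 x1 x2 x3 x4 : F) : generic_pentagon x0 x1 x2 x3 x4 ->
  (miquelC x2 x3 x4 x0 x1).1 - (miquelC x4 x0 x1 x2 x3).1
    = (x4 - x2) * (x1 - x4) * denX x0 x1 x2 x3 x4
      / (miquel_den1 x4 x0 x1 x2 x3 * miquel_den1 x2 x3 x4 x0 x1) /\
  (miquelC x2 x3 x4 x0 x1).2 - (miquelC x4 x0 x1 x2 x3).2
    = - ((x4 - x2) * (x1 - x4) * denX x0 x1 x2 x3 x4)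
      / (miquel_den2 x4 x0 x1 x2 x3 * miquel_den2 x2 x3 x4 x0 x1).
Proof.
move=> [[? ? ? ? ?] _ _ [_ _ ? _ ?] [_ _ ? _ ?]].
by rewrite /miquelC /denX /miquel_den1 /miquel_den2 /=; split; field; nonzero.
Qed.

Lemma icross_miquel_consecutive (x0 x1 x2 x3 x4 : F) : generic_pentagon x0 x1 x2 x3 x4 ->
  icross (miquelC x4 x0 x1 x2 x3) (miquelC x0 x1 x2 x3 x4) (miquelC x1 x2 x3 x4 x0)
  = denX x0 x1 x2 x3 x4 ^+ 2 * - (denJ x0 x1 x2 x3 x4
      * ((x0 - x1) * (x0 - x3) * (x1 - x2) * (x1 - x3) * (x1 - x4) * (x2 - x4)))
    / (miquel_den1 x4 x0 x1 x2 x3 * miquel_den1 x0 x1 x2 x3 x4 * miquel_den2 x4 x0 x1 x2 x3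
       * miquel_den2 x0 x1 x2 x3 x4 * miquel_den1 x1 x2 x3 x4 x0 * miquel_den2 x1 x2 x3 x4 x0).
Proof.
move=> g; have [e1 e2] := miquelC_sub1 g; have [f1 f2] := miquelC_sub2 g.
move: g => [_ _ _ [? ? _ _ ?] [? ? _ _ ?]].
rewrite (icross_scaled _ _ _ _ _ _ e1 e2 f1 f2) //; congr (_ * _ / _).
by rewrite /denJ /miquel_den1 /miquel_den2; ring.
Qed.

Lemma icross_miquel_skip (x0 x1 x2 x3 x4 : F) : generic_pentagon x0 x1 x2 x3 x4 ->
  icross (miquelC x4 x0 x1 x2 x3) (miquelC x0 x1 x2 x3 x4) (miquelC x2 x3 x4 x0 x1)
  = denX x0 x1 x2 x3 x4 ^+ 2 * - (denJ x0 x1 x2 x3 x4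
      * ((x0 - x1) * (x0 - x2) * (x1 - x4) * (x2 - x4) ^+ 3))
    / (miquel_den1 x4 x0 x1 x2 x3 * miquel_den1 x0 x1 x2 x3 x4 * miquel_den2 x4 x0 x1 x2 x3
       * miquel_den2 x0 x1 x2 x3 x4 * miquel_den1 x2 x3 x4 x0 x1 * miquel_den2 x2 x3 x4 x0 x1).
Proof.
move=> g; have [e1 e2] := miquelC_sub1 g; have [f1 f2] := miquelC_sub3 g.
move: g => [_ _ _ [? _ ? _ ?] [? _ ? _ ?]].
rewrite (icross_scaled _ _ _ _ _ _ e1 e2 f1 f2) //; congr (_ * _ / _).
by rewrite /denJ /miquel_den1 /miquel_den2; ring.
Qed.

End UnitCirclePentagon.

Section CyclicIndices.
Implicit Types i j k : 'I_5.

Lemma nx_add i m n : nx (nx i m) n = nx i (m + n).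
Proof. by apply: val_inj; rewrite /= modnDml addnA. Qed.

Lemma nx_wrap i n : nx i (5 + n) = nx i n.
Proof. by apply: val_inj; rewrite /= addnCA modnDl. Qed.

Lemma nx0 i : nx i 0 = i.
Proof. by apply: val_inj; rewrite /= addn0 modn_small. Qed.

Lemma nx_sub i j : exists2 d, (d < 5)%N & j = nx i d.
Proof.
exists ((j + (5 - i)) %% 5)%N; first exact: ltn_pmod.
apply: val_inj; rewrite /= modnDmr addnCA subnKC; last exact: ltnW.
by rewrite modnDr modn_small.
Qed.

Lemma cyclic_eq (T : Type) (f : 'I_5 -> T) :
  (forall i, f (nx i 1) = f i) -> forall i, f i = f ord0.
Proof.
move=> fS i; have [d _ ->] := nx_sub ord0 i.
by elim: d => [|d IHd]; rewrite ?nx0 // -[d.+1]addn1 -nx_add fS.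
Qed.

(* Every 3-subset of Z/5 is a rotation of {0, 1, 2} or of {0, 1, 3}. *)
Lemma Z5_triples (Q : 'I_5 -> 'I_5 -> 'I_5 -> Prop) :
    (forall i j k, Q i j k -> Q j k i) -> (forall i j k, Q i j k -> Q j i k) ->
    (forall i j, Q i i j) ->
    (forall i, Q i (nx i 1) (nx i 2)) -> (forall i, Q i (nx i 1) (nx i 3)) ->
  forall i j k, Q i j k.
Proof.
move=> rot swap diag near far.
have rot2 i j k : Q i j k -> Q k i j by move=> /rot /rot.
have sorted i d e : (0 < d < e)%N -> (e < 5)%N -> Q i (nx i d) (nx i e).
  case: d e => [|[|[|[|[|d]]]]] [|[|[|[|[|e]]]]] // _ _; try exact: near; try exact: far.
  - by have := near (nx i 4); rewrite !nx_add !nx_wrap nx0 => /rot.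
  - by have := far (nx i 2); rewrite !nx_add !nx_wrap nx0 => /rot2.
  - by have := far (nx i 4); rewrite !nx_add !nx_wrap nx0 => /rot.
  - by have := near (nx i 3); rewrite !nx_add !nx_wrap nx0 => /rot2.
move=> i j k; have [d d5 ->] := nx_sub i j; have [e e5 ->] := nx_sub i k.
case: (ltngtP d e) => [de | ed | <-]; last exact/rot/rot/diag.
- case: d d5 de => [_ _ | d _ de]; first by rewrite nx0.
  exact: sorted.
- case: e e5 ed => [_ _ | e _ ed]; first by rewrite nx0; apply/rot.
  exact/rot/swap/sorted.
Qed.

End CyclicIndices.

Section ComplexCoordinates.
Variables (R : realType) (O : pt R) (rho : R).
Hypothesis rho_neq0 : rho != 0.
Implicit Types (P Q S T : pt R) (w : R[i]).
Local Open Scope complex_scope.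

Definition zcoord P : R[i] := ((P.1 - O.1) / rho) +i* ((P.2 - O.2) / rho).
Definition zpt P : R[i] * R[i] := (zcoord P, (zcoord P)^*).
Definition of_zcoord w : pt R := (O.1 + rho * complex.Re w, O.2 + rho * complex.Im w).

Let scale_eq0 (v : R) : (- (2 * v) / rho ^+ 2 == 0) = (v == 0).
Proof.
by rewrite mulf_eq0 invr_eq0 expf_eq0 (negbTE rho_neq0) andbF orbF oppr_eq0 mulf_eq0 pnatr_eq0.
Qed.

Lemma icross_zpt0 P Q S : icross (zpt P) (zpt Q) (zpt S) = 0 <-> cross P Q S = 0.
Proof.
have -> : icross (zpt P) (zpt Q) (zpt S) = (- (2 * cross P Q S) / rho ^+ 2)*i.
  by rewrite /icross /zpt /zcoord /cross /=; congr Complex; field.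
split=> [/eqP | ->]; last by rewrite mulr0 oppr0 mul0r.
by rewrite eq_complex /= eqxx scale_eq0 => /eqP.
Qed.

Lemma imeet_zpt_neq0 P Q S T : lines_meet P Q S T -> imeet (zpt P) (zpt Q) (zpt S) (zpt T) != 0.
Proof.
have -> : imeet (zpt P) (zpt Q) (zpt S) (zpt T)
  = (- (2 * ((Q.1 - P.1) * (T.2 - S.2) - (Q.2 - P.2) * (T.1 - S.1))) / rho ^+ 2)*i.
  by rewrite /imeet /zpt /zcoord /=; congr Complex; field.
by rewrite /lines_meet eq_complex /= eqxx scale_eq0.
Qed.

Lemma idist_zptE P Q : idist (zpt P) (zpt Q) = (sqdist P Q / rho ^+ 2)%:C.
Proof. by rewrite /idist /zpt /zcoord /sqdist /=; congr Complex; field. Qed.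

Lemma idist_zpt P Q P' Q' :
  idist (zpt P) (zpt Q) = idist (zpt P') (zpt Q') <-> sqdist P Q = sqdist P' Q'.
Proof.
rewrite !idist_zptE; split=> [[] | -> //]; apply: mulIf.
by rewrite invr_eq0 expf_neq0.
Qed.

Lemma zcoord_inj : injective zcoord.
Proof.
have rhoV : rho^-1 != 0 by rewrite invr_eq0.
by move=> [p1 p2] [q1 q2] [/(mulIf rhoV)/addIr -> /(mulIf rhoV)/addIr ->].
Qed.

Lemma zpt_neq P Q : P <> Q -> (zpt P).1 != (zpt Q).1 /\ (zpt P).2 != (zpt Q).2.
Proof.
move=> PQ; split; apply/eqP => e; apply/PQ/zcoord_inj => //.
by move: (congr1 conjc e : (zcoord P)^*^* = (zcoord Q)^*^*); rewrite !conjcK.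
Qed.

Lemma zpt_of_zcoord w : zpt (of_zcoord w) = (w, w^*).
Proof.
rewrite /zpt; suff -> : zcoord (of_zcoord w) = w by [].
by case: w => u v; rewrite /zcoord /of_zcoord /=; congr Complex; field.
Qed.

Lemma zpt_center : zpt O = (0, 0).
Proof. by rewrite /zpt /zcoord !subrr !mul0r /= oppr0. Qed.

Lemma zpt_on_circle P : sqdist O P = rho ^+ 2 -> zpt P = unit_pt (zcoord P).
Proof.
move=> hP; have unit : zcoord P * (zcoord P)^* = 1.
  have := idist_zptE P O; rewrite zpt_center /idist /= !subr0 => ->.
  have -> : sqdist P O = rho ^+ 2 by rewrite -hP /sqdist; ring.
  by rewrite divff // expf_neq0.
have nz : zcoord P != 0 by apply: contra_eq_neq unit => ->; rewrite mul0r eq_sym oner_neq0.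
by rewrite /zpt /unit_pt; congr pair; apply: (mulfI nz); rewrite unit mulfV.
Qed.

End ComplexCoordinates.

Lemma collinear_equidistant_not_unique (R : realType) (I : finType) (P : I -> pt R)
    (P0 J : pt R) :
  (forall k l, cross P0 (P k) (P l) = 0) -> (forall i, sqdist J (P i) = sqdist J P0) ->
  exists2 J', J' <> J & forall i, sqdist J' (P i) = sqdist J' P0.
Proof.
move=> col eqJ.
have [d d_neq0 d_perp] : exists2 d : pt R, d != (0, 0) &
    forall i, d.1 * ((P i).1 - P0.1) + d.2 * ((P i).2 - P0.2) = 0.
  case: (pickP (fun k => P k != P0)) => [k Pk | allP0].
    exists (P0.2 - (P k).2, (P k).1 - P0.1); last by move=> i /=; rewrite -(col k i) /cross; ring.
    apply: contra Pk; rewrite xpair_eqE => /andP[/eqP/subr0_eq e2 /eqP/subr0_eq e1].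
    by rewrite [P k]surjective_pairing [P0]surjective_pairing e1 e2.
  exists (1, 0) => [|i]; first by rewrite xpair_eqE oner_eq0.
  by move/negbFE/eqP: (allP0 i) => ->; rewrite !subrr !mulr0 addr0.
exists (J.1 + d.1, J.2 + d.2) => [ | i].
  case: J {eqJ} => j1 j2 /= [e1 e2].
  have d1 : d.1 = 0 by transitivity ((j1 + d.1) - j1); [ring | rewrite e1 subrr].
  have d2 : d.2 = 0 by transitivity ((j2 + d.2) - j2); [ring | rewrite e2 subrr].
  by move: d_neq0; rewrite [d]surjective_pairing d1 d2 eqxx.
apply/eqP; rewrite -subr_eq0; apply/eqP.
transitivity ((sqdist J (P i) - sqdist J P0)
              - 2 * (d.1 * ((P i).1 - P0.1) + d.2 * ((P i).2 - P0.2))).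
  by rewrite /sqdist /=; ring.
by rewrite eqJ d_perp subrr mulr0 subr0.
Qed.

Section MiquelPentagram.
Variables (R : realType) (A B K C L : 'I_5 -> pt R) (O J X : pt R).
Hypothesis hB : forall i : 'I_5,
  lines_meet (A i) (A (nx i 1)) (A (nx i 2)) (A (nx i 3)) /\
  on_line (A i) (A (nx i 1)) (B (nx i 3)) /\ on_line (A (nx i 2)) (A (nx i 3)) (B (nx i 3)).
Hypothesis hK : forall i : 'I_5, circumcenter (A i) (A (nx i 1)) (B (nx i 2)) (K (nx i 2)).
Hypothesis hC : forall i : 'I_5,
  C (nx i 1) <> A (nx i 1) /\ K (nx i 2) <> K (nx i 3) /\
  sqdist (K (nx i 2)) (C (nx i 1)) = sqdist (K (nx i 2)) (A (nx i 1)) /\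
  sqdist (K (nx i 3)) (C (nx i 1)) = sqdist (K (nx i 3)) (A (nx i 1)).
Hypothesis hL : forall i : 'I_5, circumcenter (C (nx i 1)) (B (nx i 2)) (B (nx i 3)) (L i).
Hypothesis hO : forall i : 'I_5, sqdist O (A i) = sqdist O (A ord0).
Hypothesis hJ : forall i : 'I_5, sqdist J (C i) = sqdist J (C ord0).
Hypothesis hJu : forall J' : pt R,
  (forall i : 'I_5, sqdist J' (C i) = sqdist J' (C ord0)) -> J' = J.
Hypothesis hXu : forall X' : pt R, (forall i : 'I_5, on_line (K i) (L i) X') -> X' = X.

Lemma radius_gt0 : 0 < sqdist O (A ord0).
Proof.
rewrite lt_def /sqdist addr_ge0 ?sqr_ge0 // andbT; apply/eqP => r0.
have AO i : A i = O.
  move/eqP: (hO i); rewrite /sqdist r0 paddr_eq0 ?sqr_ge0 // !sqrf_eq0 !subr_eq0.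
  by case/andP=> /eqP e1 /eqP e2; rewrite [A i]surjective_pairing [O]surjective_pairing e1 e2.
by have [+ _] := hB ord0; rewrite /lines_meet !AO !subrr eqxx.
Qed.

Let rho := Num.sqrt (sqdist O (A ord0)).

Lemma rho_neq0 : rho != 0.
Proof. by rewrite sqrtr_eq0 -ltNge radius_gt0. Qed.

Local Notation zpt := (zpt O rho).
Local Notation a i := (zcoord O rho (A i)).
Local Notation collinear_zpt := (icross_zpt0 O rho_neq0).
Local Notation sqdist_zpt := (idist_zpt O rho_neq0).
Local Notation "f \at i" := (f (a i) (a (nx i 1)) (a (nx i 2)) (a (nx i 3)) (a (nx i 4)))
  (at level 10, i at level 9).

Lemma zpt_A i : zpt (A i) = unit_pt (a i).
Proof. by apply: zpt_on_circle; rewrite ?rho_neq0 // hO sqr_sqrtr // ltW // radius_gt0. Qed.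

Lemma a_neq0 i : a i != 0.
Proof.
apply/eqP => a0; suff AO : A i = O.
  by move: radius_gt0; rewrite -(hO i) AO /sqdist !subrr expr0n addr0 ltxx.
by apply: (@zcoord_inj _ O rho rho_neq0); rewrite a0 /zcoord !subrr !mul0r.
Qed.

Lemma a_conj i : (a i)^*%C = (a i)^-1.
Proof. exact: (congr1 snd (zpt_A i)). Qed.

Lemma chord_neq0 i :
  a i - a (nx i 1) != 0 /\ a i * a (nx i 1) - a (nx i 2) * a (nx i 3) != 0.
Proof.
have [hm _] := hB i; apply: imeet_unit_pt_neq0; rewrite ?a_neq0 // -!zpt_A.
exact (imeet_zpt_neq0 O rho_neq0 hm).
Qed.

Lemma zpt_B j : zpt (B j) = meetB (a (nx j 2)) (a (nx j 3)) (a (nx j 4)) (a j).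
Proof.
have [hm [h1 h2]] := hB (nx j 2); rewrite !nx_add ?nx_wrap ?nx0 in hm h1 h2.
apply: meetBP; rewrite ?a_neq0 // -!zpt_A.
- exact (imeet_zpt_neq0 O rho_neq0 hm).
- exact/collinear_zpt.
- exact/collinear_zpt.
Qed.

Lemma zpt_K j : zpt (K j) = centerK (a (nx j 2)) (a (nx j 3)) (a (nx j 4)) (a j).
Proof.
have [ncol [e1 e2]] := hK (nx j 3); rewrite !nx_add ?nx_wrap ?nx0 in ncol e1 e2.
have [_ p] := chord_neq0 (nx j 2); rewrite !nx_add ?nx_wrap ?nx0 in p.
apply: centerKP; rewrite ?a_neq0 // -!zpt_A -?zpt_B.
- by apply/eqP => /collinear_zpt.
- exact/sqdist_zpt.
- exact/sqdist_zpt.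
Qed.

Lemma miquel_den_neq0 i :
  miquel_den1 \at i != 0 /\ miquel_den2 \at i != 0.
Proof.
have [_ [KK _]] := hC i; have [ne1 ne2] := zpt_neq O rho_neq0 KK.
rewrite !zpt_K !nx_add ?nx_wrap ?nx0 in ne1 ne2.
have [[_ p0] [_ p4]] := (chord_neq0 i, chord_neq0 (nx i 4)).
rewrite !nx_add ?nx_wrap ?nx0 in p4.
have [d1 d2] := centerK_sub (a_neq0 i) (a_neq0 _) (a_neq0 _) (a_neq0 _) (a_neq0 (nx i 4)) p4 p0.
split.
- apply: contraNneq ne2 => z; rewrite eq_sym -subr_eq0.
  by rewrite d2 z mul0r.
- apply: contraNneq ne1 => z; rewrite eq_sym -subr_eq0.
  by rewrite d1 z mulr0 mul0r.
Qed.

Lemma generic_at i : generic_pentagon \at i.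
Proof.
have facts j := (a_neq0 (nx i j), chord_neq0 (nx i j), miquel_den_neq0 (nx i j)).
have := facts 0; have := facts 1; have := facts 2; have := facts 3; have := facts 4.
rewrite !nx_add ?nx_wrap ?nx0.
by do 5!move=> [[? [? ?]] [? ?]]; split; split.
Qed.

Lemma zpt_C j :
  zpt (C j) = miquelC (a (nx j 4)) (a j) (a (nx j 1)) (a (nx j 2)) (a (nx j 3)).
Proof.
have [CA [_ [e1 e2]]] := hC (nx j 4); rewrite !nx_add ?nx_wrap ?nx0 in CA e1 e2.
move/sqdist_zpt: e1; move/sqdist_zpt: e2; rewrite !zpt_K zpt_A !nx_add ?nx_wrap ?nx0.
have := generic_at (nx j 4); rewrite !nx_add ?nx_wrap ?nx0.
move=> [[n0 n1 n2 n3 n4] _ [p0 _ _ _ p4] [d1 _ _ _ _] [d2 _ _ _ _]] e2 e1.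
apply: (miquelCP n0 n1 n2 n3 n4 p4 p0 d1 d2 _ e1 e2).
by have [+ _] := zpt_neq O rho_neq0 CA; rewrite zpt_A.
Qed.

Lemma zpt_L i : zpt (L i) = centerL \at i.
Proof.
have [ncol [e1 e2]] := hL i.
have {ncol} : icross (zpt (C (nx i 1))) (zpt (B (nx i 2))) (zpt (B (nx i 3))) != 0.
  by apply/eqP => /collinear_zpt.
move/sqdist_zpt: e1; move/sqdist_zpt: e2; rewrite !zpt_C !zpt_B !nx_add ?nx_wrap ?nx0.
have [[n0 n1 n2 n3 n4] [_ _ _ d34 _] [p0 _ _ _ p4] [m1 _ _ _ _] [m2 _ _ _ _]] := generic_at i.
by move=> e2 e1 ncol; apply: (centerLP n0 n1 n2 n3 n4 d34 p4 p0 m1 m2 ncol e1 e2).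
Qed.

Lemma cyclic_at (T : Type) (f : R[i] -> R[i] -> R[i] -> R[i] -> R[i] -> T) :
  (forall x0 x1 x2 x3 x4, f x1 x2 x3 x4 x0 = f x0 x1 x2 x3 x4) ->
  forall i, f \at i = f \at ord0.
Proof.
move=> f_rot; apply: (@cyclic_eq _ (fun i => f \at i)) => i.
by rewrite !nx_add ?nx_wrap ?nx0 f_rot.
Qed.

Lemma denJ_at i : denJ \at i = denJ \at ord0. Proof. exact (cyclic_at denJ_rot i). Qed.
Lemma denX_at i : denX \at i = denX \at ord0. Proof. exact (cyclic_at denX_rot i). Qed.
Lemma centerJ_at i : centerJ \at i = centerJ \at ord0. Proof. exact (cyclic_at centerJ_rot i). Qed.
Lemma pointX_at i : pointX \at i = pointX \at ord0. Proof. exact (cyclic_at pointX_rot i). Qed.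

Lemma den_neq0 : denJ \at ord0 != 0 /\ denX \at ord0 != 0.
Proof.
suff : denJ \at ord0 * denX \at ord0 != 0 by rewrite mulf_eq0 negb_or => /andP.
apply/eqP => degenerate.
have vanish (e : R[i]) : denX \at ord0 ^+ 2 * - (denJ \at ord0 * e) = 0.
  move/eqP: degenerate; rewrite mulf_eq0 => /orP[] /eqP ->;
  by rewrite ?expr2 !(mul0r, mulr0, oppr0).
have C_collinear : forall i j k, cross (C i) (C j) (C k) = 0.
  apply: Z5_triples => [i j k | i j k | i j | i | i].
  - by move=> h; rewrite -h /cross; ring.
  - move=> h; transitivity (- cross (C i) (C j) (C k)); first by rewrite /cross; ring.
    by rewrite h oppr0.
  - by rewrite /cross; ring.
  - apply/collinear_zpt; rewrite !zpt_C !nx_add ?nx_wrap ?nx0.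
    rewrite icross_miquel_consecutive; last exact: generic_at.
    by rewrite denJ_at denX_at vanish mul0r.
  - apply/collinear_zpt; rewrite !zpt_C !nx_add ?nx_wrap ?nx0.
    rewrite icross_miquel_skip; last exact: generic_at.
    by rewrite denJ_at denX_at vanish mul0r.
have [J' J'J eqJ'] := collinear_equidistant_not_unique (C_collinear ord0) hJ.
exact/J'J/hJu.
Qed.

Lemma zpt_J : zpt J = centerJ \at ord0.
Proof.
have [nJ _] := den_neq0.
have w_conj : (centerJ \at ord0).1^*%C = (centerJ \at ord0).2.
  by apply: (centerJ_conj (f := conjc)); first [exact: a_neq0 | exact: a_conj | done].
have Jw : zpt (of_zcoord O rho (centerJ \at ord0).1) = centerJ \at ord0.
  by rewrite (zpt_of_zcoord O rho_neq0) w_conj -surjective_pairing.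
rewrite -Jw; congr zpt; symmetry; apply: hJu.
apply: (@cyclic_eq _ (fun i => sqdist _ (C i))) => i; apply/sqdist_zpt.
rewrite Jw !zpt_C !nx_add ?nx_wrap ?nx0 -(centerJ_at i).
by apply: centerJ_equidist; [exact: generic_at | rewrite (denJ_at i)].
Qed.

Lemma zpt_X : zpt X = pointX \at ord0.
Proof.
have [_ nX] := den_neq0.
have w_conj : (pointX \at ord0).1^*%C = (pointX \at ord0).2.
  by apply: (pointX_conj (f := conjc)); first [exact: a_neq0 | exact: a_conj | done].
have Xw : zpt (of_zcoord O rho (pointX \at ord0).1) = pointX \at ord0.
  by rewrite (zpt_of_zcoord O rho_neq0) w_conj -surjective_pairing.
rewrite -Xw; congr zpt; symmetry; apply: hXu => i; apply/collinear_zpt.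
rewrite Xw zpt_K zpt_L -(pointX_at i).
by apply: pointX_on_KL; [exact: generic_at | rewrite (denX_at i)].
Qed.

Lemma collinear_OJX : collinear O J X.
Proof.
apply/collinear_zpt; rewrite zpt_center zpt_J zpt_X.
exact: icross_centerJ_pointX.
Qed.

End MiquelPentagram.

Theorem theorem2p4 (R : realType) (A B K C L : 'I_5 -> pt R) (O J X : pt R)
  (hB : forall i : 'I_5,
     lines_meet (A i) (A (nx i 1)) (A (nx i 2)) (A (nx i 3)) /\
     on_line (A i) (A (nx i 1)) (B (nx i 3)) /\
     on_line (A (nx i 2)) (A (nx i 3)) (B (nx i 3)))
  (hK : forall i : 'I_5, circumcenter (A i) (A (nx i 1)) (B (nx i 2)) (K (nx i 2)))
  (hC : forall i : 'I_5,
     C (nx i 1) <> A (nx i 1) /\ K (nx i 2) <> K (nx i 3) /\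
     sqdist (K (nx i 2)) (C (nx i 1)) = sqdist (K (nx i 2)) (A (nx i 1)) /\
     sqdist (K (nx i 3)) (C (nx i 1)) = sqdist (K (nx i 3)) (A (nx i 1)))
  (hL : forall i : 'I_5, circumcenter (C (nx i 1)) (B (nx i 2)) (B (nx i 3)) (L i))
  (hO : forall i : 'I_5, sqdist O (A i) = sqdist O (A ord0))
  (hJ : forall i : 'I_5, sqdist J (C i) = sqdist J (C ord0))
  (hJu : forall J' : pt R, (forall i : 'I_5, sqdist J' (C i) = sqdist J' (C ord0)) -> J' = J)
  (hX : forall i : 'I_5, K i <> L i /\ on_line (K i) (L i) X)
  (hXu : forall X' : pt R, (forall i : 'I_5, on_line (K i) (L i) X') -> X' = X) :
  collinear O J X.
Proof.
exact: collinear_OJX hB hK hC hL hO hJ hJu hXu.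
Qed.
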